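(* Fix a level $\ell$ with $SS_\ell>0$ and an integer shift $G$, let $B=2^b$, and write $W_\ell 2^G=q_\ell+f_\ell$ with $q_\ell=\lfloor W_\ell 2^G\rfloor$ and $f_\ell\in[0,1)$ (so $A_\ell(G)=q_\ell+1$). Conditioned on an outer iteration of the inter-level sampler reaching the boundary case $x=A_\ell(G)$ at level $\ell$, the refinement loop accepts level $\ell$ with probability exactly $f_\ell$ and abandons the outer iteration (restarting the procedure) with probability exactly $1-f_\ell$.
   Context: Fix an integer $b\ge 2$. There is a set $\mathcal L$ of $N$ levels, which are consecutive integers. Each level $\ell$ holds a finite (possibly empty) multiset of normalized significands, each an integer in $[2^{b-1},2^b)$. Let $z$ be the total number of stored significands over all levels; assume $z<2^b$. For each level, $SS_\ell$ is the sum of its significands (so $SS_\ell=0$ iff the level is empty); set $SS_\ell=0$ for integers $\ell\notin\mathcal L$. The level weight is $W_\ell=SS_\ell2^\ell$. For an integer global shift $G$, $A_\ell(G)=\lfloor W_\ell2^G\rfloor+1$ if $SS_\ell>0$ and $A_\ell(G)=0$ if $SS_\ell=0$; $A(G)=\sum_\ell A_\ell(G)$ and $M(G)=\sum_\ell W_\ell2^G$. The configuration is nonempty if $z\ge1$. Inter-level sampler (Algorithm 1), with shift $G$ and $A=A(G)$: it performs independent outer iterations. In an outer iteration, draw $x$ uniformly from $\{1,\dots,A\}$ and scan the levels in decreasing order starting from the largest nonempty level. At the current level $\ell$: if $x<A_\ell(G)$, return $\ell$; if $x=A_\ell(G)$, run the refinement loop for $m=1,2,\dots$: draw $r$ uniformly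 from $\{0,\dots,2^b-1\}$ independently, let $t=\lfloor SS_\ell 2^{\ell+G+mb}\rfloor \bmod 2^b$; if $r<t$ return $\ell$; else if $r>t$ or $\ell+G+mb\ge 0$, abandon this outer iteration and start a new one; otherwise continue with $m+1$. If $x>A_\ell(G)$, set $x\leftarrow x-A_\ell(G)$ and move to the next lower level. *)

From mathcomp Require Import all_boot all_order all_algebra.
Set Implicit Arguments. Unset Strict Implicit. Unset Printing Implicit Defensive.
Import Order.TTheory GRing.Theory Num.Theory.
Local Open Scope ring_scope.

(* Level i : 'I_N of the configuration is the integer  lo + i  (N consecutive
   levels).  sig i is the multiset (a seq) of significands stored at level i. *)

Definition SSum (s : seq nat) : nat := sumn s.

(* SS * 2^e as a rational, e an integer exponent; with e = l + G this is W_l 2^G *)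
Definition scaledW (SS : nat) (e : int) : rat := (SS%:R : rat) * (2%:R : rat) ^ e.

Definition Aval (SS : nat) (e : int) : nat :=
  if (0 < SS)%N then (`|Num.floor (scaledW SS e)|%N).+1 else 0%N.

Definition lvl_exp (lo : int) (N : nat) (i : 'I_N) (G : int) : int :=
  lo + (nat_of_ord i)%:Z + G.

Definition Aof (b : nat) (lo : int) (N : nat) (sig : 'I_N -> seq nat) (G : int)
  (i : 'I_N) : nat := Aval (SSum (sig i)) (lvl_exp lo i G).

Definition Atot (b : nat) (lo : int) (N : nat) (sig : 'I_N -> seq nat) (G : int) : nat :=
  (\sum_(i < N) Aof b lo sig G i)%N.

Definition scan_order (N : nat) (sig : 'I_N -> seq nat) : seq 'I_N :=
  [seq i <- rev (enum 'I_N) | (0 < SSum (sig i))%N].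

Fixpoint scan (N : nat) (A : 'I_N -> nat) (ls : seq 'I_N) (x : nat)
  : option ('I_N * bool) :=
  match ls with
  | [::] => None
  | i :: ls' =>
      if (x < A i)%N then Some (i, false)
      else if x == A i then Some (i, true)
      else scan A ls' (x - A i)
  end.

(* Refinement loop at a level with sum SS and exponent e = l + G, currently at
   step m, consuming the independent uniform draws rs (values in [0, 2^b)).
   Returns true = "return l", false = "abandon the outer iteration". *)
Fixpoint refine (b SS : nat) (e : int) (m : nat) (rs : seq nat) : bool :=
  match rs with
  | [::] => false
  | r :: rs' =>
      let k := e + (m * b)%N%:Z in
      let t := (Num.floor (scaledW SS k) %% (2 ^ b)%N%:Z)%Z in
      if r%:Z < t then true
      else if (t < r%:Z) || (0 <= k) then false
      else refine b SS e m.+1 rs'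
  end.

Inductive outcome := Ret of nat | Abandon.

Definition is_ret (l : nat) (o : outcome) : bool :=
  if o is Ret i then i == l else false.
Definition is_abandon (o : outcome) : bool :=
  if o is Abandon then true else false.

Definition outer_iter (b : nat) (lo : int) (N : nat) (sig : 'I_N -> seq nat)
  (G : int) (x : nat) (rs : seq nat) : outcome :=
  match scan (Aof b lo sig G) (scan_order sig) x with
  | Some (i, false) => Ret i
  | Some (i, true) =>
      if refine b (SSum (sig i)) (lvl_exp lo i G) 1 rs then Ret i else Abandon
  | None => Abandon
  end.

(* Sample space of one outer iteration: x uniform in {1,...,A} (encoded as
   x' : 'I_A with x = x'+1) and K independent uniform draws in {0,...,2^b-1}. *)
Notation sample_space b lo sig G K :=
  ('I_(Atot b lo sig G) * K.-tuple 'I_(2 ^ b))%type.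

Definition boundary_ev (b : nat) (lo : int) (N : nat) (sig : 'I_N -> seq nat)
  (G : int) (K : nat) (l : 'I_N) : pred (sample_space b lo sig G K) :=
  fun p => scan (Aof b lo sig G) (scan_order sig) (nat_of_ord (fst p)).+1 == Some (l, true).

Arguments boundary_ev : clear implicits.

Definition accept_ev (b : nat) (lo : int) (N : nat) (sig : 'I_N -> seq nat)
  (G : int) (K : nat) (l : 'I_N) : pred (sample_space b lo sig G K) :=
  fun p => boundary_ev b lo N sig G K l p &&
    is_ret l (outer_iter b lo sig G (nat_of_ord (fst p)).+1 (map val (tval (snd p)))).

Definition abandon_ev (b : nat) (lo : int) (N : nat) (sig : 'I_N -> seq nat)
  (G : int) (K : nat) (l : 'I_N) : pred (sample_space b lo sig G K) :=
  fun p => boundary_ev b lo N sig G K l p &&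
    is_abandon (outer_iter b lo sig G (nat_of_ord (fst p)).+1 (map val (tval (snd p)))).

Definition cond_prob (T : finType) (E C : pred T) : rat :=
  (#|[pred p | E p && C p]|%:R) / (#|C|%:R).
Arguments accept_ev : clear implicits.
Arguments abandon_ev : clear implicits.

From mathcomp Require Import all_boot all_order all_algebra.
From mathcomp Require Import zify ring.
Import Order.TTheory GRing.Theory Num.Theory.
Local Open Scope ring_scope.

(* Conditioning on the boundary case fixes the first draw x to a single value,
   so the conditional probabilities are proportions of refinement draw
   sequences.  Writing y = W 2^G and B = 2^b, the m-th refinement step compares
   the draw r with the m-th base-B digit t_m of the fractional part frac y:
   r < t_m (probability t_m / B) accepts, r = t_m (probability 1 / B) moves on
   to the next digit, and r > t_m abandons.  Hence the probability of accepting
   from digit m on is  t_m / B + (1 / B) * (the same from digit m + 1), which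
   unrolls to the base-B expansion of frac y; the expansion is finite because
   y 2^(mb) is an integer once  l + G + m b >= 0, where the loop stops. *)

Definition frac {R : archiRealFieldType} (y : R) : R := y - (Num.floor y)%:~R.

Section FractionalPart.
Variable R : archiRealFieldType.
Implicit Types y : R.

Lemma frac_ge0 y : 0 <= frac y.
Proof. by rewrite /frac subr_ge0 floor_le. Qed.

Lemma frac_lt1 y : frac y < 1.
Proof. by rewrite /frac ltrBlDr addrC -[1]/(1%:~R) -intrD floorD1_gt. Qed.

Lemma frac_int (z : int) : frac (z%:~R : R) = 0.
Proof. by rewrite /frac intrKfloor subrr. Qed.

(* Multiplying by B shifts the leading base-B digit d of frac y out of the
   fractional part. *)
Lemma mulz_frac_digit (B : int) y : 0 < B ->
  let d := (Num.floor (B%:~R * y) %% B)%Z in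
  [/\ 0 <= d, d < B & B%:~R * frac y = d%:~R + frac (B%:~R * y)].
Proof.
move=> B_gt0 d; set z := Num.floor y.
have By_split : B%:~R * y = B%:~R * frac y + (B * z)%:~R.
  by rewrite /frac intrM; ring.
have floor_By : Num.floor (B%:~R * y) = Num.floor (B%:~R * frac y) + B * z.
  by rewrite By_split floorDrz ?intr_int // intrKfloor.
have d_ge0 : 0 <= Num.floor (B%:~R * frac y).
  by rewrite floor_ge0 mulr_ge0 ?frac_ge0 // ler0z ltW.
have d_ltB : Num.floor (B%:~R * frac y) < B.
  by rewrite floor_lt_int -[X in _ < X]mulr1 ltr_pM2l ?frac_lt1 ?ltr0z.
have -> : d = Num.floor (B%:~R * frac y).
  by rewrite /d floor_By addrC mulrC modzMDl modz_small ?d_ge0.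
split=> //; rewrite [in RHS]/frac floor_By intrD By_split intrM /frac -/z; ring.
Qed.

End FractionalPart.

Lemma scaledW_addn SS k (b : nat) :
  scaledW SS (k + b%:Z) = (2 ^ b)%N%:R * scaledW SS k.
Proof.
rewrite /scaledW expfzDr ?pnatr_eq0 // natrX.
have -> : (2%:R : rat) ^ (b%:Z) = 2%:R ^+ b by [].
ring.
Qed.

Lemma frac_scaledW_eq0 SS (k : int) : 0 <= k -> frac (scaledW SS k) = 0.
Proof.
case: k => // n _.
have -> : scaledW SS n = ((SS * 2 ^ n)%N%:Z)%:~R.
  by rewrite /scaledW -pmulrn natrM natrX.
exact: frac_int.
Qed.

Section TupleCounting.
Variable B : nat.

Lemma sum_tuples_cons n (F : seq nat -> nat) :
  (\sum_(t : n.+1.-tuple 'I_B) F (map val t) =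
   \sum_(r : 'I_B) \sum_(t : n.-tuple 'I_B) F (val r :: map val t))%N.
Proof.
rewrite pair_big /=.
rewrite (reindex (fun p : 'I_B * n.-tuple 'I_B => [tuple of p.1 :: p.2])) //=.
exists (fun u : n.+1.-tuple 'I_B => (thead u, behead_tuple u)).
  by move=> [x t] _ /=; rewrite theadE; congr pair; apply: val_inj.
by move=> u _ /=; rewrite [RHS]tuple_eta.
Qed.

Lemma sum_tuples_const n : (\sum_(t : n.-tuple 'I_B) 1 = B ^ n)%N.
Proof. by rewrite sum1_card card_tuple card_ord. Qed.

Lemma sum_tuples_negb n (P : seq nat -> bool) :
  (\sum_(t : n.-tuple 'I_B) ~~ P (map val t) =
   B ^ n - \sum_(t : n.-tuple 'I_B) P (map val t))%N.
Proof.
have split_const :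
    (\sum_(t : n.-tuple 'I_B) ~~ P (map val t) +
     \sum_(t : n.-tuple 'I_B) P (map val t) = B ^ n)%N.
  by rewrite -big_split -sum_tuples_const; apply: eq_bigr => t _; case: (P _).
by rewrite -split_const addnK.
Qed.

Lemma sum_ord_digit (d X Y : nat) : (d < B)%N ->
  (\sum_(r < B) (if (r < d)%N then X else if r == d :> nat then Y else 0) = d * X + Y)%N.
Proof.
move=> d_ltB.
rewrite -(big_mkord xpredT (fun r => if (r < d)%N then X else if r == d then Y else 0)%N).
rewrite (@big_cat_nat _ _ _ d 0 B) ?(ltnW d_ltB) //=.
rewrite big_nat_cond (eq_bigr (fun _ => X)); last by move=> i /andP[/andP[_ ->]].
rewrite -big_nat_cond sum_nat_const_nat subn0 mulnC.
rewrite big_ltn // ltnn eqxx big_nat_cond big1 ?addn0 //.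
by move=> i /andP[/andP[lt_di _] _]; rewrite ltnNge ltnW //= gtn_eqF.
Qed.

End TupleCounting.

(* Step m.+1 of the loop reads the leading base-2^b digit of the fractional
   part of W 2^(e + m b). *)
Lemma sum_refine b SS e n m : 0 <= e + ((m + n) * b)%N%:Z ->
  (\sum_(t : n.-tuple 'I_(2 ^ b)) refine b SS e m.+1 (map val t))%:R =
  frac (scaledW SS (e + (m * b)%N%:Z)) * (2 ^ b)%N%:R ^+ n.
Proof.
elim: n m => [|n IHn] m exp_ge0.
  by rewrite addn0 in exp_ge0; rewrite big1 ?frac_scaledW_eq0 ?mul0r //; case=> -[].
set y := scaledW SS (e + (m * b)%N%:Z).
have B_gt0 : 0 < (2 ^ b)%N%:Z by rewrite ltz_nat expn_gt0.
have [d_ge0 d_ltB frac_y] := @mulz_frac_digit rat _ y B_gt0.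
set d := (Num.floor _ %% _)%Z in d_ge0 d_ltB frac_y.
set k := e + (m.+1 * b)%N%:Z.
have W_k : scaledW SS k = ((2 ^ b)%N%:Z)%:~R * y.
  have -> : k = (e + (m * b)%N%:Z) + b%:Z by rewrite /k mulSn PoszD; ring.
  by rewrite scaledW_addn /y pmulrn.
have digit_k : (Num.floor (scaledW SS k) %% (2 ^ b)%N%:Z)%Z = d by rewrite W_k.
pose dn := `|d|%N.
have d_nat : d = dn%:Z by rewrite /dn gez0_abs.
have dn_ltB : (dn < 2 ^ b)%N by rewrite -ltz_nat -d_nat.
rewrite (sum_tuples_cons _ _ (fun s => nat_of_bool (refine b SS e m.+1 s))).
rewrite (eq_bigr (fun r : 'I_(2 ^ b) => if (r < dn)%N then (2 ^ b) ^ n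
    else if val r == dn then (if (0 <= k)%R then 0
      else \sum_(t : n.-tuple 'I_(2 ^ b)) refine b SS e m.+2 (map val t))
    else 0))%N; last first.
  move=> r _ /=; rewrite -/k digit_k d_nat ltz_nat.
  case: ltngtP => r_dn /=.
  - by rewrite sum_tuples_const.
  - by rewrite ltz_nat r_dn /= big1.
  - by rewrite r_dn ltxx /=; case: (0 <= k); first rewrite big1.
rewrite sum_ord_digit // natrD natrM natrX.
case: (leP 0 k) => k_sgn /=.
  have := @frac_scaledW_eq0 SS k k_sgn; rewrite W_k => frac0.
  rewrite frac0 addr0 d_nat -!pmulrn in frac_y.
  by rewrite addr0 -frac_y exprS; ring.
rewrite (IHn m.+1); last by rewrite addSnnS.
rewrite -/k W_k d_nat -!pmulrn in frac_y *.
by rewrite exprS mulrA [frac y * _]mulrC frac_y; ring.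
Qed.

Section ScanBoundary.
Set Implicit Arguments. Unset Strict Implicit.
Variables (N : nat) (A : 'I_N -> nat).

Fixpoint scan_offset (ls : seq 'I_N) (l : 'I_N) : nat :=
  if ls is i :: ls' then (if i == l then 0 else A i + scan_offset ls' l)%N
  else 0%N.

Lemma scan_mem ls x l c : scan A ls x = Some (l, c) -> l \in ls.
Proof.
elim: ls x => [|i ls IHls] x //=.
case: ltnP => _; first by case=> -> _; rewrite mem_head.
case: eqP => _; first by case=> -> _; rewrite mem_head.
by move/IHls; rewrite inE => ->; rewrite orbT.
Qed.

Lemma scan_offset_boundary ls l : l \in ls -> (0 < A l)%N ->
  scan A ls (scan_offset ls l + A l) = Some (l, true).
Proof.
elim: ls => [|i ls IHls] //= l_in Al_gt0.
case: eqP => [->|/eqP i_neq_l]; first by rewrite add0n ltnn eqxx.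
have {}l_in : l \in ls by move: l_in; rewrite in_cons eq_sym (negbTE i_neq_l).
have Ai_lt : (A i < A i + (scan_offset ls l + A l))%N by lia.
by rewrite -addnA ltnNge (ltnW Ai_lt) /= (gtn_eqF Ai_lt) addKn IHls.
Qed.

Lemma scan_boundary_offset ls x l : uniq ls ->
  scan A ls x = Some (l, true) -> x = (scan_offset ls l + A l)%N.
Proof.
elim: ls x => [|i ls IHls] x //= /andP[i_notin uniq_ls].
case: ltnP => // Ai_le.
case: eqP => [-> [<-]|x_neq]; first by rewrite eqxx.
move=> scan_x; have l_in := scan_mem scan_x.
have -> : (i == l) = false by apply: contraNF i_notin => /eqP->.
have := IHls _ uniq_ls scan_x; lia.
Qed.

Lemma scan_offset_le ls l : l \in ls ->
  (scan_offset ls l + A l <= \sum_(i <- ls) A i)%N.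
Proof.
elim: ls => [|i ls IHls] //= l_in; rewrite big_cons.
case: eqP => [->|/eqP i_neq_l]; first by rewrite add0n leq_addr.
have {}l_in : l \in ls by move: l_in; rewrite in_cons eq_sym (negbTE i_neq_l).
by rewrite -addnA leq_add2l IHls.
Qed.

End ScanBoundary.

Lemma scan_order_uniq N (sig : 'I_N -> seq nat) : uniq (scan_order sig).
Proof. by rewrite filter_uniq // rev_uniq enum_uniq. Qed.

Lemma mem_scan_order N (sig : 'I_N -> seq nat) i :
  (i \in scan_order sig) = (0 < SSum (sig i))%N.
Proof. by rewrite mem_filter mem_rev mem_enum andbT. Qed.

Lemma sum_scan_order_le N (A : 'I_N -> nat) (sig : 'I_N -> seq nat) :
  (\sum_(i <- scan_order sig) A i <= \sum_(i < N) A i)%N.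
Proof.
rewrite big_filter big_rev big_mkcond big_enum /=.
by apply: leq_sum => i _; case: ifP.
Qed.

Lemma eq_cond_prob (T : finType) (E E' C C' : pred T) :
  E =1 E' -> C =1 C' -> cond_prob E C = cond_prob E' C'.
Proof.
move=> eqE eqC; rewrite /cond_prob.
by congr (_%:R / _%:R); apply: eq_card => p; rewrite !unfold_in /= ?eqE eqC.
Qed.

Section Slice.
Context {M K B x0 : nat}.
Hypothesis x0_range : (1 <= x0 <= M)%N.

Lemma card_slice (P : seq nat -> bool) :
  #|[pred p : 'I_M * K.-tuple 'I_B | (p.1.+1 == x0) && P (map val p.2)]| =
  (\sum_(t : K.-tuple 'I_B) P (map val t))%N.
Proof.
have x0_lt : (x0.-1 < M)%N by lia.
rewrite -sum1_card big_mkcond /=.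
rewrite -(pair_big xpredT xpredT (fun (i : 'I_M) (t : K.-tuple 'I_B) =>
  if (i.+1 == x0) && P (map val t) then 1%N else 0%N)) /=.
rewrite (bigD1 (Ordinal x0_lt)) //= [X in (_ + X)%N]big1 ?addn0.
  apply: eq_bigr => t _; have -> : x0.-1.+1 == x0 by apply/eqP; lia.
  by case: (P _).
move=> i i_neq; apply: big1 => t _.
have -> // : (i.+1 == x0) = false.
by apply: contraNF i_neq => /eqP E; apply/eqP/val_inj => /=; lia.
Qed.

Lemma cond_prob_slice (P : seq nat -> bool) :
  cond_prob [pred p : 'I_M * K.-tuple 'I_B | (p.1.+1 == x0) && P (map val p.2)]
            [pred p : 'I_M * K.-tuple 'I_B | p.1.+1 == x0] =
  (\sum_(t : K.-tuple 'I_B) P (map val t))%:R / (B ^ K)%:R.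
Proof.
rewrite /cond_prob -(card_slice P) -(sum_tuples_const B K).
rewrite -(card_slice xpredT).
by congr (_%:R / _%:R); apply: eq_card => p; rewrite !unfold_in /= ?andbT // andbAC andbb.
Qed.

End Slice.

Section BoundaryCase.
Context {b : nat} {lo : int} {N : nat} {sig : 'I_N -> seq nat} {G : int}.
Context {K : nat} {l : 'I_N}.
Hypothesis SS_gt0 : (0 < SSum (sig l))%N.

Local Notation A := (Aof b lo sig G).
Local Notation accepts := (refine b (SSum (sig l)) (lvl_exp lo l G) 1).

Definition boundary_draw : nat := (scan_offset A (scan_order sig) l + A l)%N.

Lemma Aof_gt0 : (0 < A l)%N.
Proof. by rewrite /Aof /Aval SS_gt0. Qed.

Lemma boundary_draw_range : (1 <= boundary_draw <= Atot b lo sig G)%N.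
Proof.
rewrite addn_gt0 Aof_gt0 orbT /=.
apply: leq_trans (scan_offset_le A _) (sum_scan_order_le _ _).
by rewrite mem_scan_order.
Qed.

Lemma scan_boundaryE x :
  (scan A (scan_order sig) x == Some (l, true)) = (x == boundary_draw).
Proof.
apply/eqP/eqP => [|->]; first exact/scan_boundary_offset/scan_order_uniq.
by apply: scan_offset_boundary; rewrite ?mem_scan_order ?Aof_gt0.
Qed.

Lemma outer_iter_boundary rs :
  outer_iter b lo sig G boundary_draw rs = if accepts rs then Ret l else Abandon.
Proof.
have scan_x0 : scan A (scan_order sig) boundary_draw = Some (l, true).
  by apply/eqP; rewrite scan_boundaryE.
by rewrite /outer_iter scan_x0.
Qed.

Lemma boundary_evE : boundary_ev b lo N sig G K l =1
  [pred p : sample_space b lo sig G K | p.1.+1 == boundary_draw].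
Proof. by move=> p; rewrite /boundary_ev /= scan_boundaryE. Qed.

Lemma accept_evE : accept_ev b lo N sig G K l =1
  [pred p : sample_space b lo sig G K |
     (p.1.+1 == boundary_draw) && accepts (map val p.2)].
Proof.
move=> p; rewrite /accept_ev boundary_evE /=.
by case: eqP => // ->; rewrite outer_iter_boundary; case: (accepts _) => /=; rewrite ?eqxx.
Qed.

Lemma abandon_evE : abandon_ev b lo N sig G K l =1
  [pred p : sample_space b lo sig G K |
     (p.1.+1 == boundary_draw) && ~~ accepts (map val p.2)].
Proof.
move=> p; rewrite /abandon_ev boundary_evE /=.
by case: eqP => // ->; rewrite outer_iter_boundary; case: (accepts _).
Qed.

End BoundaryCase.

Theorem mainTheorem1 (b : nat) (lo : int) (N : nat) (sig : 'I_N -> seq nat)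
  (G : int) (l : 'I_N) (K : nat) :
  (2 <= b)%N ->
  (forall i : 'I_N, all (fun s => (2 ^ b.-1 <= s < 2 ^ b)%N) (sig i)) ->
  (\sum_(i < N) size (sig i) < 2 ^ b)%N ->
  (0 < SSum (sig l))%N ->
  (* K draws suffice: the refinement loop at level l stops by step K *)
  (1 <= K)%N -> 0 <= lvl_exp lo l G + (K * b)%N%:Z ->
  let f := scaledW (SSum (sig l)) (lvl_exp lo l G)
           - (Num.floor (scaledW (SSum (sig l)) (lvl_exp lo l G)))%:~R in
  cond_prob (accept_ev b lo N sig G K l) (boundary_ev b lo N sig G K l) = f /\
  cond_prob (abandon_ev b lo N sig G K l) (boundary_ev b lo N sig G K l) = 1 - f.
Proof.
move=> _ _ _ SS_gt0 _ K_enough f.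
set accepts := refine b (SSum (sig l)) (lvl_exp lo l G) 1.
have accept_count : (\sum_(t : K.-tuple 'I_(2 ^ b)) accepts (map val t))%:R
    = f * ((2 ^ b) ^ K)%N%:R.
  by rewrite (@sum_refine _ _ _ _ 0) ?add0n ?mul0n ?addr0 // !natrX.
have BK_neq0 : ((2 ^ b) ^ K)%N%:R != 0 :> rat by rewrite pnatr_eq0 -lt0n !expn_gt0.
have draw_range := boundary_draw_range (b := b) (lo := lo) (G := G) SS_gt0.
rewrite (eq_cond_prob (accept_evE SS_gt0) (boundary_evE SS_gt0)).
rewrite (eq_cond_prob (abandon_evE SS_gt0) (boundary_evE SS_gt0)).
rewrite (cond_prob_slice draw_range accepts) accept_count; split; first by rewrite mulfK.
rewrite (cond_prob_slice draw_range (fun s => ~~ accepts s)) sum_tuples_negb.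
rewrite natrB; last first.
  by rewrite -(sum_tuples_const _ K); apply: leq_sum => t _; case: (accepts _).
by rewrite accept_count mulrBl mulfK ?divff.
Qed.
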